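(* Let $n_1,n_2$ be distinct odd primes with $\gcd(n_1-1,n_2-1)=6$, $n=n_1n_2$, and let $D_0,\dots,D_5$ be the Whiteman generalized cyclotomic classes of order 6 modulo $n$ (see context). Let $q$ be a power of a prime $p$ with $\gcd(q,n)=1$ and let $\beta$ be a primitive $n$-th root of unity in an extension of $\mathrm{GF}(q)$. Let $N_1=\{n_1,2n_1,\dots,(n_2-1)n_1\}$ and $N_2=\{n_2,2n_2,\dots,(n_1-1)n_2\}$. Then for every $0\le j\le 5$, $$\sum_{i\in D_j}\beta^{ai}=\begin{cases}-\frac{n_1-1}{6}\bmod p, & a\in N_1,\\ -\frac{n_2-1}{6}\bmod p, & a\in N_2.\end{cases}$$
   Context: Let $e=(n_1-1)(n_2-1)/6$, $g$ a common primitive root of $n_1$ and $n_2$, $u$ an integer with $u\equiv g\pmod{n_1}$, $u\equiv 1\pmod{n_2}$, and $D_i=\{g^su^i\bmod n: s=0,\dots,e-1\}$ for $i=0,\dots,5$. An integer ''mod $p$'' denotes its image in the prime field $\mathrm{GF}(p)$. *)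

From HB Require Import structures.
From mathcomp Require Import all_boot all_order all_algebra all_field.
Set Implicit Arguments. Unset Strict Implicit. Unset Printing Implicit Defensive.
Import Order.TTheory GRing.Theory.

Definition primitive_root_mod (m g : nat) : bool :=
  coprime g m &&
  [forall k : 'I_(totient m), (0 < k) ==> (g ^ k %% m != 1 %% m)].

Definition whit_e (n1 n2 : nat) : nat := ((n1 - 1) * (n2 - 1)) %/ 6.

Definition whiteman_D (n1 n2 g u i : nat) : pred nat :=
  [pred x | [exists s : 'I_(whit_e n1 n2),
               x == (g ^ s * u ^ i) %% (n1 * n2)]].

Definition setN (n1 n2 : nat) : pred nat :=
  [pred a | [exists k : 'I_n2, (0 < k) && (a == k * n1)]].

From HB Require Import structures.
From mathcomp Require Import all_boot all_order all_algebra all_field.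
From mathcomp Require Import zify.
Import Order.TTheory GRing.Theory.

(* For a = k n1 with 0 < k < n2, the power beta^(a i) only depends on i mod n2, and
   z = beta^(k n1) is a nontrivial n2-th root of unity.  The class D_j consists of the
   residues g^s u^j mod n for s < e, and these are pairwise distinct because
   e = lcm(n1-1, n2-1).  Modulo n2 they reduce to g^s, so as s runs over e = (n1-1)/6 * (n2-1)
   values they cover the nonzero residues mod n2 exactly (n1-1)/6 times; each pass
   contributes the sum of z^x over x <> 0 mod n2, which is -1.  The case a = k n2 is the
   same modulo n1, where u = g (mod n1) shifts the exponent by j. *)

Lemma fermat_little P g : prime P -> coprime g P -> g ^ P.-1 = 1 %[mod P].
Proof. by move=> P_prime gP; rewrite -(totient_prime P_prime) cyclic.Euler_exp_totient. Qed.

Lemma expn_mod_prime_pred P g s :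
  prime P -> coprime g P -> g ^ s = g ^ (s %% P.-1) %[mod P].
Proof.
move=> P_prime gP.
rewrite {1}(divn_eq s P.-1) mulnC expnD expnM -modnMml -modnXm.
by rewrite fermat_little // modnXm exp1n modnMml mul1n.
Qed.

Lemma primitive_root_mod_expn_inj {P g s t} : prime P -> primitive_root_mod P g ->
  g ^ s = g ^ t %[mod P] -> s = t %[mod P.-1].
Proof.
move=> P_prime /andP[gP /forallP g_order].
have P1_gt0 : 0 < P.-1 by have := prime_gt1 P_prime; lia.
rewrite (expn_mod_prime_pred _ _ s) // (expn_mod_prime_pred _ _ t) //.
move: (ltn_pmod s P1_gt0) (ltn_pmod t P1_gt0).
move: (s %% P.-1) (t %% P.-1) => {}s {}t.
wlog le_st : s t / s <= t.
  by move=> wlog_st ? ? ?; case: (leqP s t) => [|/ltnW] /wlog_st ->.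
move=> s_lt t_lt gst; apply/eqP; rewrite eqn_leq le_st leqNgt; apply/negP => lt_st.
have k_lt : s + (P.-1 - t) < totient P by rewrite totient_prime //; lia.
have k_gt0 : 0 < s + (P.-1 - t) by lia.
have /negP[] := implyP (g_order (Ordinal k_lt)) k_gt0.
apply/eqP; rewrite /= expnD -modnMml gst modnMml -expnD subnKC ?fermat_little //; lia.
Qed.

Lemma sum_modn_periodic (V : nmodType) (G : nat -> V) m c :
  (\sum_(s < c * m) G (s %% m)%N = (\sum_(r < m) G r) *+ c)%R.
Proof.
rewrite -(big_mkord xpredT (fun s => G (s %% m))).
elim: c => [|c IHc]; first by rewrite mul0n big_geq.
rewrite mulSnr (big_cat_nat _ (leq_addr _ _)) //= IHc mulrSr; congr (_ + _)%R.
rewrite -{1}[c * m]add0n big_addn addKn big_mkord; apply: eq_bigr => r _.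
by rewrite addnC modnMDl modn_small.
Qed.

Lemma eq_lt_lcm_mod {m1 m2 s t} : s < lcmn m1 m2 -> t < lcmn m1 m2 ->
  s = t %[mod m1] -> s = t %[mod m2] -> s = t.
Proof.
wlog le_st : s t / s <= t.
  move=> wlog_st s_lt t_lt e1 e2; case: (leqP s t) => [le_st | /ltnW le_ts].
    exact: wlog_st.
  exact/esym/(wlog_st t s le_ts t_lt s_lt (esym e1) (esym e2)).
move=> s_lt t_lt /esym/eqP; rewrite eqn_mod_dvd // => m1_dvd.
move=> /esym/eqP; rewrite eqn_mod_dvd // => m2_dvd.
have : lcmn m1 m2 %| t - s by rewrite dvdn_lcm m1_dvd.
by rewrite /dvdn modn_small => [/eqP|]; lia.
Qed.

Section WhitemanClasses.

Context {n1 n2 g u : nat}.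
Hypotheses (n1_prime : prime n1) (n2_prime : prime n2) (gcd_pred : gcdn n1.-1 n2.-1 = 6).
Hypotheses (g_prim1 : primitive_root_mod n1 g) (g_prim2 : primitive_root_mod n2 g).
Hypotheses (u_mod1 : u = g %[mod n1]) (u_mod2 : u = 1 %[mod n2]).

Lemma whit_e_lcm : whit_e n1 n2 = lcmn n1.-1 n2.-1.
Proof. by rewrite /whit_e !subn1 -(muln_lcm_gcd n1.-1) gcd_pred mulnK. Qed.

Lemma whit_e_divl : whit_e n1 n2 = (n1 - 1) %/ 6 * n2.-1.
Proof. by rewrite /whit_e !subn1 divn_mulAC // -gcd_pred dvdn_gcdl. Qed.

Lemma whit_e_divr : whit_e n1 n2 = (n2 - 1) %/ 6 * n1.-1.
Proof. by rewrite /whit_e mulnC !subn1 divn_mulAC // -gcd_pred dvdn_gcdr. Qed.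

Lemma whiteman_rep_mod1 s j : (g ^ s * u ^ j) %% (n1 * n2) = g ^ (s + j) %[mod n1].
Proof. by rewrite modn_dvdm ?dvdn_mulr // -modnMmr -modnXm u_mod1 modnXm modnMmr expnD. Qed.

Lemma whiteman_rep_mod2 s j : (g ^ s * u ^ j) %% (n1 * n2) = g ^ s %[mod n2].
Proof.
by rewrite modn_dvdm ?dvdn_mull // -modnMmr -modnXm u_mod2 modnXm exp1n modnMmr muln1.
Qed.

Lemma whiteman_rep_inj j {s t} : s < whit_e n1 n2 -> t < whit_e n1 n2 ->
  (g ^ s * u ^ j) %% (n1 * n2) = (g ^ t * u ^ j) %% (n1 * n2) -> s = t.
Proof.
rewrite whit_e_lcm => s_lt t_lt st; apply: (eq_lt_lcm_mod s_lt t_lt).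
- have : g ^ (s + j) = g ^ (t + j) %[mod n1] by rewrite -!whiteman_rep_mod1 st.
  move/(primitive_root_mod_expn_inj n1_prime g_prim1)/eqP.
  by rewrite eqn_modDr => /eqP.
- apply: (primitive_root_mod_expn_inj n2_prime g_prim2).
  by rewrite -!(whiteman_rep_mod2 _ j) st.
Qed.

Lemma sum_whiteman_D {V : nmodType} (G : nat -> V) j :
  (\sum_(i < n1 * n2 | (i : nat) \in whiteman_D n1 n2 g u j) G i
   = \sum_(s < whit_e n1 n2) G ((g ^ s * u ^ j) %% (n1 * n2))%N)%R.
Proof.
have n_gt0 : 0 < n1 * n2 by rewrite muln_gt0 !prime_gt0.
pose rep (s : 'I_(whit_e n1 n2)) : 'I_(n1 * n2) := Ordinal (ltn_pmod (g ^ s * u ^ j) n_gt0).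
have rep_inj : injective rep.
  by move=> s t /(congr1 val) /= /(whiteman_rep_inj j (ltn_ord s) (ltn_ord t)) /val_inj.
rewrite (eq_bigl (mem [set rep s | s in [set: 'I_(whit_e n1 n2)]])) => [|i].
  by rewrite big_imset /=; [apply: eq_bigl => s; rewrite in_setT | move=> ? ? _ _ /rep_inj].
rewrite inE; apply/existsP/imsetP => [[s /eqP i_eq]|[s _ ->]]; last by exists s.
by exists s => //; apply: val_inj.
Qed.

End WhitemanClasses.

Local Open Scope ring_scope.

Lemma sum_expr_unity_root {R : idomainType} {z : R} {n} :
  z ^+ n = 1 -> z != 1 -> \sum_(i < n) z ^+ i = 0.
Proof.
move=> zn1 z_neq1; apply/eqP; move: (subrX1 z n); rewrite zn1 subrr => /esym/eqP.
by rewrite mulf_eq0 subr_eq0 (negPf z_neq1).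
Qed.

Lemma sum_expr_primitive_root_mod (R : idomainType) (z : R) P g j :
  prime P -> primitive_root_mod P g -> z ^+ P = 1 -> z != 1 ->
  \sum_(r < P.-1) z ^+ (g ^ (r + j)) = -1.
Proof.
move=> P_prime g_prim zP1 z_neq1; have /andP[gP _] := g_prim.
have P_gt0 : (0 < P)%N := prime_gt0 P_prime.
pose res (r : 'I_P.-1) : 'I_P := Ordinal (ltn_pmod (g ^ (r + j)) P_gt0).
have res_inj : injective res.
  move=> r t /(congr1 val) /= /(primitive_root_mod_expn_inj P_prime g_prim).
  by move/eqP; rewrite eqn_modDr !modn_small // => /eqP/val_inj.
have res_im : [set res r | r in [set: 'I_P.-1]] = [set~ Ordinal P_gt0].
  apply/eqP; rewrite eqEcard card_imset // cardsT cardsC1 !card_ord leqnn andbT.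
  apply/subsetP => _ /imsetP[r _ ->]; rewrite !inE; apply/eqP => /(congr1 val) /=.
  have P_ndvd_g : ~~ (P %| g)%N by rewrite -prime_coprime // coprime_sym.
  by move/eqP; rewrite -/(dvdn P _) Euclid_dvdX // (negPf P_ndvd_g).
have /eqP := sum_expr_unity_root zP1 z_neq1.
rewrite (bigD1 (Ordinal P_gt0)) //= expr0 addrC addr_eq0 => /eqP <-.
under [RHS]eq_bigl => i do rewrite -in_setC1.
rewrite -res_im big_imset /=; last by move=> ? ? _ _; apply: res_inj.
by apply: eq_big => [r|r _]; rewrite ?in_setT // -(expr_mod _ zP1).
Qed.

Lemma sum_expr_primitive_root_mod_orbit (R : idomainType) (z : R) P g j c :
  prime P -> primitive_root_mod P g -> z ^+ P = 1 -> z != 1 ->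
  \sum_(s < c * P.-1) z ^+ (g ^ (s + j)) = - c%:R.
Proof.
move=> P_prime g_prim zP1 z_neq1; have /andP[gP _] := g_prim.
have period s : z ^+ (g ^ (s + j)) = z ^+ (g ^ (s %% P.-1 + j)).
  rewrite -[LHS](expr_mod _ zP1) -[RHS](expr_mod _ zP1).
  by rewrite !(expn_mod_prime_pred _ _ (_ + j)) // modnDml.
under eq_bigr => s _ do rewrite period.
rewrite (sum_modn_periodic _ (fun r => z ^+ (g ^ (r + j)))).
by rewrite sum_expr_primitive_root_mod // mulNrn.
Qed.

Lemma sum_prim_root_orbit {R : idomainType} {beta : R} {m P g} (f : nat -> nat) j c k :
  prime P -> primitive_root_mod P g -> (m * P).-primitive_root beta ->
  (0 < k < P)%N -> (forall s, f s = g ^ (s + j) %[mod P]) ->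
  \sum_(s < c * P.-1) beta ^+ (k * m * f s)%N = - c%:R.
Proof.
move=> P_prime g_prim beta_prim /andP[k_gt0 k_lt] f_mod.
pose z := beta ^+ (k * m)%N.
have zP1 : z ^+ P = 1.
  by rewrite -exprM -mulnA mulnC exprM (prim_expr_order beta_prim) expr1n.
have z_neq1 : z != 1.
  have m_gt0 : (0 < m)%N by move: (prim_order_gt0 beta_prim); rewrite muln_gt0 => /andP[].
  rewrite -(prim_order_dvd beta_prim) mulnC dvdn_pmul2r //.
  by apply: contraTN k_lt => /(dvdn_leq k_gt0); rewrite leqNgt.
under eq_bigr => s _ do rewrite exprM -/z -(expr_mod _ zP1) f_mod (expr_mod _ zP1).
exact: sum_expr_primitive_root_mod_orbit.
Qed.

Theorem lemma3 (n1 n2 g u : nat) (p q : nat) (F : finFieldType) (beta : F)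
  (Hn1 : prime n1) (Hn2 : prime n2) (Hodd1 : odd n1) (Hodd2 : odd n2)
  (Hneq : n1 != n2) (Hgcd : gcdn n1.-1 n2.-1 = 6%N)
  (Hg1 : primitive_root_mod n1 g) (Hg2 : primitive_root_mod n2 g)
  (Hu1 : u = g %[mod n1]) (Hu2 : u = 1 %[mod n2])
  (Hp : prime p) (Hq : exists2 k, (0 < k)%N & q = (p ^ k)%N)
  (Hqn : coprime q (n1 * n2))
  (HF : exists2 m, (0 < m)%N & #|F| = (q ^ m)%N)
  (Hbeta : (n1 * n2).-primitive_root beta) :
  forall j : nat, (j <= 5)%N ->
    (forall a : nat, a \in setN n1 n2 ->
       \sum_(i < n1 * n2 | (i : nat) \in whiteman_D n1 n2 g u j) beta ^+ (a * i)
       = - (((n1 - 1) %/ 6)%:R))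
    /\
    (forall a : nat, a \in setN n2 n1 ->
       \sum_(i < n1 * n2 | (i : nat) \in whiteman_D n1 n2 g u j) beta ^+ (a * i)
       = - (((n2 - 1) %/ 6)%:R)).
Proof.
move=> j _; split => a /existsP[k /andP[k_gt0 /eqP ->]].
- rewrite (sum_whiteman_D Hn1 Hn2 Hgcd Hg1 Hg2 Hu1 Hu2 (fun i => beta ^+ (k * n1 * i)%N)).
  rewrite (whit_e_divl Hgcd).
  apply: (sum_prim_root_orbit (fun s => (g ^ s * u ^ j) %% (n1 * n2))%N 0 _ _ Hn2 Hg2 Hbeta).
    by rewrite k_gt0 ltn_ord.
  by move=> s; rewrite addn0 (whiteman_rep_mod2 Hu2).
- rewrite (sum_whiteman_D Hn1 Hn2 Hgcd Hg1 Hg2 Hu1 Hu2 (fun i => beta ^+ (k * n2 * i)%N)).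
  rewrite (whit_e_divr Hgcd); rewrite mulnC in Hbeta.
  apply: (sum_prim_root_orbit (fun s => (g ^ s * u ^ j) %% (n1 * n2))%N j _ _ Hn1 Hg1 Hbeta).
    by rewrite k_gt0 ltn_ord.
  exact: (whiteman_rep_mod1 Hu1 ^~ j).
Qed.
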